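(* In a scarce-reserves equilibrium, the aggregate real balance of reserves is strictly decreasing in the nominal interest rate: $\partial r/\partial i<0$, where $$r=\begin{cases}\dfrac{(\sigma_2+\sigma_3)\chi}{1+i_d\chi}L^{-1}(i_\ell)-\dfrac{\sigma_3\bar\delta\chi}{1+i_d\chi} & \text{if } L^{-1}(i_\ell)>\bar\delta,\\[2mm] \dfrac{\sigma_2\chi}{1+i_d\chi}L^{-1}(i_\ell) & \text{if } L^{-1}(i_\ell)\le\bar\delta.\end{cases}$$
   Context: Buyers meet sellers in one of three meeting types with probabilities $\sigma_1,\sigma_2,\sigma_3>0$ ($\sum\sigma_j=1$); type-3 buyers may use unsecured credit up to a limit $\bar\delta\ge0$. DM preferences $u,c$ with $u'>0,u''<0$, $c'>0,c''\ge0$, $u(0)=c(0)=0$, $q^*$ solving $u'(q^* )=c'(q^* )$; bargaining power $\theta\in(0,1]$, payment $v(q)=(1-\theta)u(q)+\theta c(q)$, liquidity premium $\lambda(q)=\theta[u'(q)-c'(q)]/[(1-\theta)u'(q)+\theta c'(q)]$ (strictly decreasing on $[0,q^* )$, $0$ at $q^*$), and $L(z)=\lambda(\min\{q^*,v^{-1}(z)\})$ with strictly decreasing inverse $L^{-1}$. Policy: nominal rate $i\ge0$, interest on reserves $i_r$, reserve requirement $\chi\in(0,1)$, $a=(1-\chi)/\chi$. Bank cost functions $\gamma,\eta$ twice differentiable, $\gamma',\gamma'',\eta',\eta''>0$ on $(0,\infty)$, $\gamma(0)=\gamma'(0)=\eta(0)=\eta'(0)=0$; entry cost $k>0$. Loan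 rate $i_\ell=(1+i)/(1+i_d)-1$. In a scarce-reserves equilibrium, bank-level reserves $\tilde r$ and deposit rate $i_d>0$ solve $\gamma'(\tilde r)\tilde r-\gamma(\tilde r)+\eta'(a\tilde r)a\tilde r-\eta(a\tilde r)=k$ and $i_d=i_r-\gamma'(\tilde r)+\big[\frac{1+i}{1+i_d}-1-\eta'(a\tilde r)\big]a$, each bank lends $a\tilde r$, and aggregate reserves $r$ are given by the displayed formula. *)

From Stdlib Require Import Reals Lra.
From Coquelicot Require Import Coquelicot.
Open Scope R_scope.

Definition ratio_a (chi : R) : R := (1 - chi) / chi.

Definition loan_rate (i id : R) : R := (1 + i) / (1 + id) - 1.

(* Free-entry condition pinning down bank-level reserves r~ :
   gamma'(r) r - gamma(r) + eta'(a r) a r - eta(a r) = k *)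
Definition entry_eq (gamma dgamma eta deta : R -> R) (k chi rt : R) : Prop :=
  dgamma rt * rt - gamma rt + deta (ratio_a chi * rt) * (ratio_a chi * rt)
    - eta (ratio_a chi * rt) = k.

Definition deposit_eq (dgamma deta : R -> R) (chi ir i rt id : R) : Prop :=
  id = ir - dgamma rt + ((1 + i) / (1 + id) - 1 - deta (ratio_a chi * rt)) * ratio_a chi.

Definition scarce_eq (gamma dgamma eta deta : R -> R) (k chi ir i rt id : R) : Prop :=
  0 <= rt /\ entry_eq gamma dgamma eta deta k chi rt /\
  0 < id /\ deposit_eq dgamma deta chi ir i rt id.

Definition agg_reserves (Linv : R -> R) (s2 s3 chi dbar id il : R) : R :=
  if Rle_dec (Linv il) dbar then
    s2 * chi / (1 + id * chi) * Linv il
  else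
    (s2 + s3) * chi / (1 + id * chi) * Linv il - s3 * dbar * chi / (1 + id * chi).

(* The free-entry condition does not involve [i]: its left-hand side is
   [G(r) + H(a r)] with [G(x) = x gamma'(x) - gamma(x)], whose derivative
   [x gamma''(x)] is positive, and likewise for [H], so it pins down the same
   bank-level reserves [r~] at every nominal rate.  Subtracting the deposit
   conditions at two rates then gives [i_d2 - i_d1 = a (q2 - q1)] with
   [q = 1 + i_l = (1+i)/(1+i_d)]; since [q (1 + i_d) = 1 + i] rises, [i_d] and
   [i_l] both rise.  Hence [L^{-1}(i_l)] falls, the piecewise-linear demand
   [s2 l] / [(s2+s3) l - s3 dbar] falls with it, and so does the weight
   [chi / (1 + i_d chi)]. *)

From Stdlib Require Import Reals Lra.
From Coquelicot Require Import Coquelicot.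
Open Scope R_scope.

Definition legendre (f df : R -> R) (x : R) : R := df x * x - f x.

Lemma is_derive_legendre (f df ddf : R -> R) (x : R) :
  (forall t, is_derive f t (df t)) -> is_derive df x (ddf x) ->
  is_derive (legendre f df) x (ddf x * x).
Proof.
  intros Hf Hdf.
  pose proof (is_derive_mult df (fun t => t) x _ _ Hdf (is_derive_id x) Rmult_comm) as Hprod.
  pose proof (is_derive_minus _ _ x _ _ Hprod (Hf x)) as H.
  replace (ddf x * x) with (minus (plus (mult (ddf x) x) (mult (df x) one)) (df x)).
  - exact H.
  - unfold minus, plus, mult, opp, one; simpl. ring.
Qed.

Lemma is_derive_comp_scale (f df : R -> R) (a x : R) :
  is_derive f (a * x) (df (a * x)) ->
  is_derive (fun t => f (a * t)) x (a * df (a * x)).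
Proof.
  intros Hf.
  pose proof (is_derive_comp f (fun t => a * t) x _ _ Hf
                (is_derive_scal _ x a 1 (is_derive_id x))) as H.
  rewrite Rmult_1_r in H. exact H.
Qed.

Lemma strict_increasing_of_derive_pos (h dh : R -> R) :
  (forall x, is_derive h x (dh x)) -> (forall x, 0 < x -> 0 < dh x) ->
  forall x y, 0 <= x -> x < y -> h x < h y.
Proof.
  intros Hh Hpos x y Hx Hxy.
  destruct (MVT_cor2 h dh x y Hxy) as [c [Hmvt Hc]].
  { intros c _. apply is_derive_Reals, Hh. }
  assert (Hdc : 0 < dh c) by (apply Hpos; lra).
  nra.
Qed.

Lemma ratio_a_pos (chi : R) : 0 < chi < 1 -> 0 < ratio_a chi.
Proof. intros Hchi. unfold ratio_a. apply Rdiv_lt_0_compat; lra. Qed.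

Section EntryCondition.

Variables gamma dgamma ddgamma eta deta ddeta : R -> R.
Hypothesis Hg1 : forall x, is_derive gamma x (dgamma x).
Hypothesis Hg2 : forall x, is_derive dgamma x (ddgamma x).
Hypothesis Hgconvex : forall x, 0 < x -> 0 < ddgamma x.
Hypothesis He1 : forall x, is_derive eta x (deta x).
Hypothesis He2 : forall x, is_derive deta x (ddeta x).
Hypothesis Heconvex : forall x, 0 < x -> 0 < ddeta x.

Definition entry_lhs (a r : R) : R := legendre gamma dgamma r + legendre eta deta (a * r).

Lemma entry_lhs_strict_increasing (a : R) : 0 < a ->
  forall x y, 0 <= x -> x < y -> entry_lhs a x < entry_lhs a y.
Proof.
  intros Ha.
  apply strict_increasing_of_derive_pos
    with (dh := fun r => ddgamma r * r + a * (ddeta (a * r) * (a * r))).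
  - intros r. unfold entry_lhs.
    apply (is_derive_plus (legendre gamma dgamma) (fun t => legendre eta deta (a * t))).
    + apply is_derive_legendre; auto.
    + apply (is_derive_comp_scale (legendre eta deta)), is_derive_legendre; auto.
  - intros r Hr.
    assert (Har : 0 < a * r) by (apply Rmult_lt_0_compat; auto).
    specialize (Hgconvex r Hr). specialize (Heconvex (a * r) Har).
    assert (0 < ddgamma r * r) by (apply Rmult_lt_0_compat; auto).
    assert (0 < ddeta (a * r) * (a * r)) by (apply Rmult_lt_0_compat; auto).
    assert (0 < a * (ddeta (a * r) * (a * r))) by (apply Rmult_lt_0_compat; auto).
    lra.
Qed.

Lemma entry_eq_unique (k chi rt1 rt2 : R) : 0 < chi < 1 ->
  0 <= rt1 -> 0 <= rt2 ->
  entry_eq gamma dgamma eta deta k chi rt1 ->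
  entry_eq gamma dgamma eta deta k chi rt2 -> rt1 = rt2.
Proof.
  intros Hchi Hr1 Hr2 E1 E2.
  pose proof (entry_lhs_strict_increasing _ (ratio_a_pos chi Hchi)) as Hincr.
  assert (Hk : forall rt, entry_eq gamma dgamma eta deta k chi rt ->
                 entry_lhs (ratio_a chi) rt = k).
  { intros rt E. unfold entry_eq in E. unfold entry_lhs, legendre. lra. }
  apply Hk in E1; apply Hk in E2.
  destruct (Rtotal_order rt1 rt2) as [H | [H | H]]; auto.
  - specialize (Hincr rt1 rt2 Hr1 H). lra.
  - specialize (Hincr rt2 rt1 Hr2 H). lra.
Qed.

End EntryCondition.

Lemma deposit_eq_rates_increasing (dgamma deta : R -> R) (chi ir rt i1 i2 id1 id2 : R) :
  0 < chi < 1 -> -1 < i1 -> i1 < i2 -> -1 < id1 -> -1 < id2 ->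
  deposit_eq dgamma deta chi ir i1 rt id1 ->
  deposit_eq dgamma deta chi ir i2 rt id2 ->
  id1 < id2 /\ loan_rate i1 id1 < loan_rate i2 id2.
Proof.
  intros Hchi Hi1 Hi12 Hid1 Hid2 D1 D2.
  pose proof (ratio_a_pos chi Hchi) as Ha.
  unfold deposit_eq in D1, D2. unfold loan_rate.
  set (a := ratio_a chi) in *.
  set (q1 := (1 + i1) / (1 + id1)) in *.
  set (q2 := (1 + i2) / (1 + id2)) in *.
  assert (Q1 : q1 * (1 + id1) = 1 + i1) by (unfold q1; field; lra).
  assert (Q2 : q2 * (1 + id2) = 1 + i2) by (unfold q2; field; lra).
  assert (Hq1 : 0 < q1) by (unfold q1; apply Rdiv_lt_0_compat; lra).
  assert (Hdiff : id2 - id1 = a * (q2 - q1)) by lra.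
  assert (Hq : q1 < q2).
  { destruct (Rlt_or_le q1 q2) as [H | H]; auto.
    assert (a * (q2 - q1) <= 0) by nra.
    assert (q2 * (1 + id2) <= q1 * (1 + id1)) by nra.
    lra. }
  split; nra.
Qed.

Definition reserve_demand (s2 s3 dbar l : R) : R :=
  if Rle_dec l dbar then s2 * l else (s2 + s3) * l - s3 * dbar.

Lemma agg_reservesE (Linv : R -> R) (s2 s3 chi dbar id il : R) :
  agg_reserves Linv s2 s3 chi dbar id il
  = chi / (1 + id * chi) * reserve_demand s2 s3 dbar (Linv il).
Proof.
  unfold agg_reserves, reserve_demand, Rdiv.
  destruct (Rle_dec (Linv il) dbar); ring.
Qed.

Lemma reserve_demand_nonneg (s2 s3 dbar l : R) :
  0 < s2 -> 0 <= s3 -> 0 <= l -> 0 <= reserve_demand s2 s3 dbar l.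
Proof.
  intros Hs2 Hs3 Hl. unfold reserve_demand.
  destruct (Rle_dec l dbar) as [H | H]; [| apply Rnot_le_lt in H]; nra.
Qed.

Lemma reserve_demand_strict_increasing (s2 s3 dbar l1 l2 : R) :
  0 < s2 -> 0 <= s3 -> l1 < l2 ->
  reserve_demand s2 s3 dbar l1 < reserve_demand s2 s3 dbar l2.
Proof.
  intros Hs2 Hs3 Hl. unfold reserve_demand.
  destruct (Rle_dec l1 dbar) as [H1 | H1], (Rle_dec l2 dbar) as [H2 | H2];
    try apply Rnot_le_lt in H1; try apply Rnot_le_lt in H2; nra.
Qed.

Lemma agg_reserves_lt (Linv : R -> R) (s2 s3 chi dbar id1 id2 il1 il2 : R) :
  0 < s2 -> 0 <= s3 -> 0 < chi -> 0 <= id1 -> id1 <= id2 ->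
  0 <= Linv il2 -> Linv il2 < Linv il1 ->
  agg_reserves Linv s2 s3 chi dbar id2 il2 < agg_reserves Linv s2 s3 chi dbar id1 il1.
Proof.
  intros Hs2 Hs3 Hchi Hid1 Hid12 HL2 HL.
  rewrite !agg_reservesE.
  pose proof (reserve_demand_nonneg s2 s3 dbar _ Hs2 Hs3 HL2) as Hd2.
  pose proof (reserve_demand_strict_increasing s2 s3 dbar _ _ Hs2 Hs3 HL) as Hd.
  assert (Hw2 : 0 < chi / (1 + id2 * chi)) by (apply Rdiv_lt_0_compat; nra).
  assert (Hw : chi / (1 + id2 * chi) <= chi / (1 + id1 * chi)).
  { unfold Rdiv. apply Rmult_le_compat_l; [lra|].
    apply Rinv_le_contravar; nra. }
  set (w1 := chi / (1 + id1 * chi)) in *. set (w2 := chi / (1 + id2 * chi)) in *.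
  nra.
Qed.

Theorem mainTheorem9
  (s1 s2 s3 chi dbar ir k : R)
  (gamma dgamma ddgamma eta deta ddeta : R -> R)
  (Linv : R -> R) (Ldom : R -> Prop)
  (Hs1 : 0 < s1) (Hs2 : 0 < s2) (Hs3 : 0 < s3) (Hsum : s1 + s2 + s3 = 1)
  (Hchi : 0 < chi < 1) (Hdbar : 0 <= dbar) (Hk : 0 < k)
  (Hg1 : forall x, is_derive gamma x (dgamma x))
  (Hg2 : forall x, is_derive dgamma x (ddgamma x))
  (Hgpos : forall x, 0 < x -> 0 < dgamma x /\ 0 < ddgamma x)
  (Hg0 : gamma 0 = 0) (Hdg0 : dgamma 0 = 0)
  (He1 : forall x, is_derive eta x (deta x))
  (He2 : forall x, is_derive deta x (ddeta x))
  (Hepos : forall x, 0 < x -> 0 < deta x /\ 0 < ddeta x)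
  (He0 : eta 0 = 0) (Hde0 : deta 0 = 0)
  (HLdec : forall x y, Ldom x -> Ldom y -> x < y -> Linv y < Linv x)
  (HLnn : forall x, Ldom x -> 0 <= Linv x) :
  forall (i1 i2 rt1 rt2 id1 id2 : R),
    0 <= i1 -> i1 < i2 ->
    scarce_eq gamma dgamma eta deta k chi ir i1 rt1 id1 ->
    scarce_eq gamma dgamma eta deta k chi ir i2 rt2 id2 ->
    Ldom (loan_rate i1 id1) -> Ldom (loan_rate i2 id2) ->
    agg_reserves Linv s2 s3 chi dbar id2 (loan_rate i2 id2)
      < agg_reserves Linv s2 s3 chi dbar id1 (loan_rate i1 id1).
Proof.
  intros i1 i2 rt1 rt2 id1 id2 Hi1 Hi12
    [Hr1 [En1 [Hid1 De1]]] [Hr2 [En2 [Hid2 De2]]] Hdom1 Hdom2.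
  assert (Hrt : rt1 = rt2).
  { apply (entry_eq_unique gamma dgamma ddgamma eta deta ddeta) with k chi; auto.
    - intros x Hx. apply Hgpos, Hx.
    - intros x Hx. apply Hepos, Hx. }
  subst rt2.
  destruct (deposit_eq_rates_increasing dgamma deta chi ir rt1 i1 i2 id1 id2)
    as [Hid Hloan]; auto; try lra.
  apply agg_reserves_lt; auto; lra.
Qed.
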